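(* Let $c>1$ be an irrational number, let $q=[c]$ (so $q=c-\{c\}$), and let $d=\{c\}^{-1}$. For a positive integer $n$ let $c'_n=[c^{-1}n]$, and define $$f(n)=[c^{-1}(n+1)]-[c^{-1}n],\qquad g(n)=[\{c\}(n+1)]-[\{c\}n].$$ Let $k$ be a nonnegative integer. For a positive integer $m$ put $x=[mc]$. Then, as $m\to\infty$, \begin{align*} \sum_{n=1}^x \frac{q f(n)+f(n)g([ \frac {n}{c}]+k+1)}{n} =\;& 1+ \log m +\log c+ \gamma +\left\{\{c\}(k+1)\right\} \\ &- \sum_{n=1}^\infty \frac{c\{ c^{-1} (n+1)\}+\{ \{c\}(c'_{n+1}+k+1)\}}{n(n+1)}+O\left(\frac{1}{m}\right), \end{align*} where $\gamma$ is Euler's constant.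
   Context: $[x]$ is the greatest integer not exceeding $x$ and $\{x\}=x-[x]$. The function $f$ is the indicator function of the set $\{[cj]: j\ge 1\}$, and $g$ is the indicator function of $\{[dj]: j\ge1\}$. The implied constant in $O(1/m)$ may depend on $c$ and $k$. *)

From Stdlib Require Import Reals Lra Lia ZArith.
From Coquelicot Require Import Coquelicot.
Open Scope R_scope.

(* [x] : the greatest integer not exceeding x (Stdlib's Int_part is floor). *)
Definition fl (x : R) : R := IZR (Int_part x).
Definition fr (x : R) : R := x - fl x.

Definition irrational (c : R) : Prop :=
  ~ exists (p q : Z), q <> 0%Z /\ c = IZR p / IZR q.

Definition euler_gamma : R :=
  real (Lim_seq (fun N => sum_n_m (fun j => / INR j) 1 N - ln (INR N))).

Definition fB (c : R) (n : R) : R := fl (/ c * (n + 1)) - fl (/ c * n).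
Definition gB (c : R) (n : R) : R := fl (fr c * (n + 1)) - fl (fr c * n).

Definition lhs (c : R) (k m : nat) : R :=
  sum_n_m (fun n : nat =>
     (fl c * fB c (INR n) + fB c (INR n) * gB c (fl (INR n / c) + INR k + 1))
     / INR n)
    1 (Z.to_nat (Int_part (INR m * c))).

(* the series sum_{n>=1} (c {c^{-1}(n+1)} + {{c}(c'_{n+1}+k+1)}) / (n(n+1)),
   with c'_j = [c^{-1} j]; indexed from n = 1 (term at n = 0 set to 0). *)
Definition series_term (c : R) (k : nat) (n : nat) : R :=
  match n with
  | O => 0
  | S _ => (c * fr (/ c * (INR n + 1)) + fr (fr c * (fl (/ c * (INR n + 1)) + INR k + 1)))
           / (INR n * (INR n + 1))
  end.

Definition rhs_main (c : R) (k m : nat) : R :=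
  1 + ln (INR m) + ln c + euler_gamma + fr (fr c * (INR k + 1))
  - Series (series_term c k).

(* Since f(n) is 0 or 1 and c = q + {c}, the summand of the left-hand side
   telescopes: with E(t) = c {c^{-1}(t+1)} + {{c}([c^{-1}(t+1)] + k + 1)},
   n times the n-th summand equals 1 - E(n) + E(n-1).  Summing up to x gives
   exactly 1 + {{c}(k+1)} + H_x - E(x)/x - sum_{1<=n<x} E(n)/(n(n+1)), and the
   theorem follows from 0 <= E <= c + 1, H_x = log x + gamma + O(1/x) and
   log x = log m + log c + O(1/m). *)
From Stdlib Require Import Reals Lra Lia ZArith.
From Coquelicot Require Import Coquelicot.
Open Scope R_scope.

Lemma fl_spec x : fl x <= x < fl x + 1.
Proof. unfold fl. destruct (base_Int_part x). lra. Qed.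

Lemma fr_bounds x : 0 <= fr x < 1.
Proof. unfold fr. destruct (fl_spec x). lra. Qed.

Lemma fl_eq0 x : 0 <= x < 1 -> fl x = 0.
Proof.
  intros H. unfold fl. destruct (base_Int_part x) as [H1 H2].
  assert (lt1 : (Int_part x < 1)%Z) by (apply lt_IZR; lra).
  assert (gtm1 : (-1 < Int_part x)%Z) by (apply lt_IZR; lra).
  replace (Int_part x) with 0%Z by lia. reflexivity.
Qed.

Lemma fl_step u v : v <= u < v + 1 -> fl u = fl v \/ fl u = fl v + 1.
Proof.
  intros H. unfold fl. destruct (base_Int_part u), (base_Int_part v).
  assert (lt2 : (Int_part u - Int_part v < 2)%Z) by (apply lt_IZR; rewrite minus_IZR; lra).
  assert (gtm1 : (-1 < Int_part u - Int_part v)%Z) by (apply lt_IZR; rewrite minus_IZR; lra).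
  destruct (Z.eq_dec (Int_part u) (Int_part v)) as [e|e].
  - left. now rewrite e.
  - right. replace (Int_part u) with (Int_part v + 1)%Z by lia. apply plus_IZR.
Qed.

Lemma Int_part_to_nat_spec y : 0 <= y ->
  INR (Z.to_nat (Int_part y)) <= y < INR (Z.to_nat (Int_part y)) + 1.
Proof.
  intros Hy. destruct (base_Int_part y) as [H1 H2].
  assert (gtm1 : (-1 < Int_part y)%Z) by (apply lt_IZR; lra).
  rewrite INR_IZR_INZ, Z2Nat.id by lia. lra.
Qed.

Lemma ln_le_sub1 y : 0 < y -> ln y <= y - 1.
Proof.
  intros Hy. rewrite <- (ln_exp (y - 1)). apply ln_le; [lra|].
  generalize (exp_ineq1_le (y - 1)). lra.
Qed.

Lemma ln_sub_bounds x y : 0 < x <= y -> (y - x) / y <= ln y - ln x <= (y - x) / x.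
Proof.
  intros Hxy.
  assert (up := ln_le_sub1 (y / x)). assert (down := ln_le_sub1 (x / y)).
  rewrite ln_div in up, down by lra.
  assert (e1 : y / x - 1 = (y - x) / x) by (field; lra).
  assert (e2 : x / y - 1 = - ((y - x) / y)) by (field; lra).
  assert (0 < y / x) by (apply Rdiv_lt_0_compat; lra).
  assert (0 < x / y) by (apply Rdiv_lt_0_compat; lra).
  lra.
Qed.

Lemma Lim_seq_between (u : nat -> R) N lo hi :
  (forall n, (N <= n)%nat -> lo <= u n <= hi) -> lo <= real (Lim_seq u) <= hi.
Proof.
  intros H.
  assert (lo_le : Rbar_le (Lim_seq (fun _ => lo)) (Lim_seq u)).
  { apply Lim_seq_le_loc. exists N. intros n Hn. apply H, Hn. }
  assert (le_hi : Rbar_le (Lim_seq u) (Lim_seq (fun _ => hi))).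
  { apply Lim_seq_le_loc. exists N. intros n Hn. apply H, Hn. }
  rewrite Lim_seq_const in lo_le, le_hi.
  destruct (Lim_seq u); simpl in *; try contradiction; lra.
Qed.

Section IncrementBounds.
Variables (u v : nat -> R) (N : nat).
Hypothesis increment_bound :
  forall n, (N <= n)%nat -> 0 <= u (S n) - u n <= v n - v (S n).

Lemma partial_increments_bound j : u N <= u (j + N) <= u N + v N - v (j + N).
Proof.
  induction j as [|j IH]; simpl; [lra|].
  destruct (increment_bound (j + N)); [lia|]. lra.
Qed.

Lemma Lim_seq_increments_bound :
  (forall n, 0 <= v n) -> u N <= real (Lim_seq u) <= u N + v N.
Proof.
  intros v_nonneg. apply (Lim_seq_between _ N). intros n Hn.
  replace n with ((n - N) + N)%nat by lia.
  destruct (partial_increments_bound (n - N)).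
  specialize (v_nonneg (n - N + N)%nat). lra.
Qed.

End IncrementBounds.

Lemma Series_tail_bound (a : nat -> R) B N :
  (forall n, 0 <= a (S n) <= B * (/ INR (S n) - / INR (S (S n)))) -> 0 <= B ->
  sum_n a N <= Series a <= sum_n a N + B / INR (S N).
Proof.
  intros Ha HB. apply (Lim_seq_increments_bound (sum_n a) (fun n => B / INR (S n))).
  - intros n _. rewrite sum_Sn.
    replace (B / INR (S n) - B / INR (S (S n)))
      with (B * (/ INR (S n) - / INR (S (S n)))) by (unfold Rdiv; ring).
    destruct (Ha n). change plus with Rplus. lra.
  - intros n. apply Rdiv_le_0_compat; [lra | apply lt_0_INR; lia].
Qed.

Definition harm (N : nat) : R := sum_n_m (fun j => / INR j) 1 N - ln (INR N).

Lemma harm_decrement N : (1 <= N)%nat ->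
  0 <= harm N - harm (S N) <= / INR N - / INR (S N).
Proof.
  intros HN. assert (HNr : 1 <= INR N) by (apply (le_INR 1); exact HN).
  assert (e : harm N - harm (S N) = ln (INR (S N)) - ln (INR N) - / INR (S N)).
  { unfold harm. rewrite sum_n_Sm by lia. unfold plus; simpl. ring. }
  rewrite e. rewrite S_INR in *.
  destruct (ln_sub_bounds (INR N) (INR N + 1)) as [lo hi]; [lra|].
  replace (INR N + 1 - INR N) with 1 in lo, hi by ring.
  unfold Rdiv in lo, hi. rewrite Rmult_1_l in lo, hi. lra.
Qed.

Lemma euler_gamma_bounds N : (1 <= N)%nat ->
  harm N - / INR N <= euler_gamma <= harm N.
Proof.
  intros HN.
  assert (e : euler_gamma = - real (Lim_seq (fun n => - harm n))).
  { unfold euler_gamma. fold harm. rewrite Lim_seq_opp.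
    destruct (Lim_seq harm); simpl; ring. }
  destruct (Lim_seq_increments_bound (fun n => - harm n) (fun n => / INR n) N)
    as [lo hi].
  - intros n Hn. destruct (harm_decrement n); [lia|]. lra.
  - intros n. destruct n; [simpl; rewrite Rinv_0; lra|].
    left. apply Rinv_0_lt_compat, lt_0_INR. lia.
  - rewrite e. lra.
Qed.

Section Telescoping.
Variables (c : R) (k : nat).
Hypothesis Hc1 : 1 < c.

Definition series_num (t : R) : R :=
  c * fr (/ c * (t + 1)) + fr (fr c * (fl (/ c * (t + 1)) + INR k + 1)).

Definition lhs_term (n : nat) : R :=
  (fl c * fB c (INR n) + fB c (INR n) * gB c (fl (INR n / c) + INR k + 1)) / INR n.

Lemma inv_c_bounds : 0 < / c < 1.
Proof.
  assert (c * / c = 1) by (field; lra).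
  assert (0 < / c) by (apply Rinv_0_lt_compat; lra). nra.
Qed.

Lemma series_num_bounds t : 0 <= series_num t <= c + 1.
Proof.
  unfold series_num. destruct (fr_bounds (/ c * (t + 1))).
  destruct (fr_bounds (fr c * (fl (/ c * (t + 1)) + INR k + 1))). nra.
Qed.

Lemma series_num_0 : series_num 0 = 1 + fr (fr c * (INR k + 1)).
Proof.
  unfold series_num. rewrite Rplus_0_l, Rmult_1_r. destruct inv_c_bounds.
  unfold fr at 1. rewrite (fl_eq0 (/ c)), Rplus_0_l by lra. field. lra.
Qed.

Lemma series_term_S n :
  series_term c k (S n) = series_num (INR (S n)) / (INR (S n) * (INR (S n) + 1)).
Proof. reflexivity. Qed.

Lemma lhs_term_telescopes p :
  lhs_term (S p) = (1 - series_num (INR (S p)) + series_num (INR p)) / INR (S p).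
Proof.
  unfold lhs_term, series_num, fB, gB.
  assert (0 < INR (S p)) by (apply lt_0_INR; lia).
  replace (INR p + 1) with (INR (S p)) by (rewrite S_INR; ring).
  replace (INR (S p) / c) with (/ c * INR (S p)) by (unfold Rdiv; ring).
  set (n := INR (S p)) in *. destruct inv_c_bounds.
  unfold fr.
  destruct (fl_step (/ c * (n + 1)) (/ c * n)) as [e|e]; [split; nra| |];
    rewrite e.
  - field. lra.
  - replace (fl (/ c * n) + 1 + INR k + 1) with (fl (/ c * n) + INR k + 1 + 1) by ring.
    field. lra.
Qed.

Lemma lhs_partial_sum p :
  sum_n_m lhs_term 1 (S p) =
  1 + fr (fr c * (INR k + 1)) + sum_n_m (fun j => / INR j) 1 (S p)
  - series_num (INR (S p)) / INR (S p) - sum_n (series_term c k) p.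
Proof.
  induction p as [|p IH].
  - rewrite !sum_n_n, sum_O, lhs_term_telescopes. simpl (INR 0).
    rewrite series_num_0. simpl (INR 1). simpl (series_term c k 0).
    match goal with |- @eq _ ?a ?b => change (@eq R a b) end. field.
  - rewrite !(sum_n_Sm _ 1 (S p)), sum_Sn, lhs_term_telescopes, series_term_S, IH
      by lia.
    assert (0 < INR (S p)) by (apply lt_0_INR; lia).
    rewrite (S_INR (S p)). set (x := INR (S p)) in *.
    change plus with Rplus.
    match goal with |- @eq _ ?a ?b => change (@eq R a b) end. field. lra.
Qed.

Lemma lhs_partial_sum_error p y : INR (S p) <= y < INR (S p) + 1 ->
  Rabs (sum_n_m lhs_term 1 (S p)
        - (1 + ln y + euler_gamma + fr (fr c * (INR k + 1)) - Series (series_term c k)))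
  <= (c + 2) / INR (S p).
Proof.
  intros Hy. rewrite lhs_partial_sum.
  set (x := INR (S p)) in *.
  assert (Hx : 1 <= x) by (apply (le_INR 1); lia).
  destruct (euler_gamma_bounds (S p)) as [g1 g2]; [lia|].
  destruct (Series_tail_bound (series_term c k) (c + 1) p) as [s1 s2].
  { intros n. rewrite series_term_S, (S_INR (S n)).
    assert (0 < INR (S n)) by (apply lt_0_INR; lia).
    destruct (series_num_bounds (INR (S n))).
    replace (series_num (INR (S n)) / (INR (S n) * (INR (S n) + 1)))
      with (series_num (INR (S n)) * (/ INR (S n) - / (INR (S n) + 1))) by (field; lra).
    assert (/ (INR (S n) + 1) <= / INR (S n)) by (apply Rinv_le_contravar; lra).
    split; [apply Rmult_le_pos | apply Rmult_le_compat_r]; lra. }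
  { lra. }
  destruct (ln_sub_bounds x y) as [l1 l2]; [lra|].
  destruct (series_num_bounds x).
  unfold harm in g1, g2. fold x in g1, g2, s2.
  assert (0 < / x) by (apply Rinv_0_lt_compat; lra).
  assert ((y - x) / x <= 1 * / x) by (apply Rmult_le_compat_r; lra).
  assert ((y - x) / y >= 0) by (apply Rle_ge, Rdiv_le_0_compat; lra).
  assert (series_num x / x <= (c + 1) / x) by (unfold Rdiv; apply Rmult_le_compat_r; lra).
  assert (0 <= series_num x / x) by (apply Rdiv_le_0_compat; lra).
  unfold Rdiv in *. apply Rabs_le. split; nra.
Qed.

End Telescoping.

Theorem theorem2 (c : R) (k : nat) (Hc1 : 1 < c) (Hirr : irrational c) :
  exists (C : R) (M : nat), 0 < C /\
    forall m : nat, (M <= m)%nat -> (1 <= m)%nat ->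
      Rabs (lhs c k m - rhs_main c k m) <= C / INR m.
Proof.
  exists (c + 2), 1%nat. split; [lra|]. intros m _ Hm.
  assert (Hmr : 1 <= INR m) by (apply (le_INR 1); exact Hm).
  change (lhs c k m) with (sum_n_m (lhs_term c k) 1 (Z.to_nat (Int_part (INR m * c)))).
  destruct (Int_part_to_nat_spec (INR m * c)) as [x_le x_gt]; [nra|].
  remember (Z.to_nat (Int_part (INR m * c))) as x eqn:Ex; clear Ex.
  assert (Hmx : (m <= x)%nat).
  { assert (Hlt : INR m < INR (S x)) by (rewrite S_INR; nra).
    apply INR_lt in Hlt. lia. }
  destruct x as [|p]; [lia|].
  unfold rhs_main. rewrite Rplus_assoc with (r2 := ln (INR m)), <- ln_mult by lra.
  eapply Rle_trans; [apply lhs_partial_sum_error; [exact Hc1 | lra]|].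
  apply Rmult_le_compat_l; [lra|].
  apply Rinv_le_contravar; [lra | apply le_INR; exact Hmx].
Qed.
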